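(* Let $R$ be an integral domain and $M$ an $R$-module. If $x,y\in M$ are non-torsion elements and $[x]=[y]\in\mathbb{P}(M)$, then there exist $a,b\in R$ such that $ax=by\neq0$.
   Context: For an $R$-module $M$ let $M^\circ=M\setminus\{0\}$. Define a relation on $M^\circ$ by $x\sim' y$ if there exist $m\in M$ and $r,s\in R$ with $x=rm$ and $y=sm$. Let $\sim$ be the equivalence relation generated by $\sim'$ (i.e. $x\sim y$ iff there is a finite chain $x=x_0\sim'x_1\sim'\cdots\sim'x_n=y$). The projective space is $\mathbb{P}(M)=M^\circ/\sim$, and $[x]$ denotes the class of $x$. An element $x$ is torsion if $rx=0$ for some nonzero $r\in R$. *)

From HB Require Import structures.
From mathcomp Require Import all_boot all_order all_algebra.
From Stdlib Require Import Relations.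
Set Implicit Arguments. Unset Strict Implicit. Unset Printing Implicit Defensive.
Import GRing.Theory.
Local Open Scope ring_scope.

Definition proj_gen (R : pzRingType) (M : lmodType R) (x y : M) : Prop :=
  x != 0 /\ y != 0 /\ exists (m : M) (r s : R), x = r *: m /\ y = s *: m.

(* ~ : the equivalence relation on M^o generated by ~'
   (reflexive-symmetric-transitive closure; we only use it on nonzero
   elements, where it coincides with the equivalence relation generated
   on M^o). *)
Definition proj_equiv (R : pzRingType) (M : lmodType R) : relation M :=
  clos_refl_sym_trans M (@proj_gen R M).

Definition same_class (R : pzRingType) (M : lmodType R) (x y : M) : Prop :=
  x != 0 /\ y != 0 /\ proj_equiv x y.

Definition torsion (R : pzRingType) (M : lmodType R) (x : M) : Prop :=
  exists r : R, r != 0 /\ r *: x = 0.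

(* Call u, v commensurable when a u = b v <> 0 for some a, b.  On non-torsion
   elements of a module over a domain this is an equivalence relation which
   contains the generating relation ~' (from u = r m and v = s m one gets
   s u = r v), and it carries non-torsion elements to non-torsion elements.
   Hence it contains the equivalence relation ~ generated by ~'. *)
From mathcomp Require Import all_boot all_order all_algebra.
Set Implicit Arguments. Unset Strict Implicit.
Import GRing.Theory.
Local Open Scope ring_scope.

Section Commensurable.
Variables (R : idomainType) (M : lmodType R).
Implicit Types u v w : M.

Definition commensurable u v := exists a b : R, a *: u = b *: v /\ a *: u != 0.

(* Commensurability is an equivalence only on non-torsion elements; adding the
   first conjunct makes it one on all of M. *)
Definition nontorsion_commensurable u v :=
  (~ torsion u <-> ~ torsion v) /\ (~ torsion u -> commensurable u v).

Lemma non_torsion_neq0 u : ~ torsion u -> u != 0.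
Proof.
move=> ntu; apply/eqP=> u0; apply: ntu.
by exists 1; rewrite oner_neq0 u0 scaler0.
Qed.

Lemma scale_neq0_scalar (a : R) u : a *: u != 0 -> a != 0.
Proof. by apply: contraNneq => ->; rewrite scale0r. Qed.

Lemma commensurable_refl u : ~ torsion u -> commensurable u u.
Proof. by move=> ntu; exists 1, 1; rewrite scale1r non_torsion_neq0. Qed.

Lemma commensurable_sym u v : commensurable u v -> commensurable v u.
Proof. by move=> [a [b [eq_ab ne0]]]; exists b, a; rewrite -eq_ab. Qed.

Lemma commensurable_non_torsion u v :
  ~ torsion u -> commensurable u v -> ~ torsion v.
Proof.
move=> ntu [a [b [eq_ab ne0]]] [t [t0 tv0]]; apply: ntu.
exists (t * a); split; first exact: mulf_neq0 t0 (scale_neq0_scalar ne0).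
by rewrite -scalerA eq_ab scalerA mulrC -scalerA tv0 scaler0.
Qed.

Lemma commensurable_trans u v w :
  ~ torsion u -> commensurable u v -> commensurable v w -> commensurable u w.
Proof.
move=> ntu [a [b [eq_ab ne_a]]] [c [d [eq_cd ne_c]]].
exists (c * a), (b * d); split.
  by rewrite -scalerA eq_ab scalerA (mulrC c b) -(scalerA b c) eq_cd scalerA.
rewrite -(scalerA c a); apply/eqP=> cau0; apply: ntu; exists (c * a); split.
  exact: mulf_neq0 (scale_neq0_scalar ne_c) (scale_neq0_scalar ne_a).
by rewrite -(scalerA c a).
Qed.

Lemma commensurable_scale_common (m : M) (r s : R) :
  ~ torsion (r *: m) -> s *: m != 0 -> commensurable (r *: m) (s *: m).
Proof.
move=> ntu v0; exists s, r; split; first by rewrite !scalerA mulrC.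
apply/eqP=> su0; apply: ntu; exists s; split=> //; exact: scale_neq0_scalar v0.
Qed.

Lemma proj_gen_commensurable u v :
  proj_gen u v -> ~ torsion u -> commensurable u v.
Proof.
move=> [_ [v0 [m [r [s [eu ev]]]]]] ntu; rewrite eu ev in ntu v0 *.
exact: commensurable_scale_common.
Qed.

Lemma proj_gen_sym u v : proj_gen u v -> proj_gen v u.
Proof. by move=> [u0 [v0 [m [r [s [eu ev]]]]]]; do 2!split=> //; exists m, s, r. Qed.

Lemma proj_gen_nontorsion_commensurable u v :
  proj_gen u v -> nontorsion_commensurable u v.
Proof.
move=> uv; have vu := proj_gen_sym uv.
split; last exact: proj_gen_commensurable.
split=> nt.
- exact: commensurable_non_torsion nt (proj_gen_commensurable uv nt).
- exact: commensurable_non_torsion nt (proj_gen_commensurable vu nt).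
Qed.

Lemma nontorsion_commensurable_refl u : nontorsion_commensurable u u.
Proof. by split=> //; apply: commensurable_refl. Qed.

Lemma nontorsion_commensurable_sym u v :
  nontorsion_commensurable u v -> nontorsion_commensurable v u.
Proof.
move=> [ntuv comm_uv]; split=> [|ntv]; first by split; apply ntuv.
by apply/commensurable_sym/comm_uv; apply ntuv.
Qed.

Lemma nontorsion_commensurable_trans u v w :
  nontorsion_commensurable u v -> nontorsion_commensurable v w ->
  nontorsion_commensurable u w.
Proof.
move=> [ntuv comm_uv] [ntvw comm_vw]; split; first exact: iff_trans ntuv ntvw.
move=> ntu; apply: (commensurable_trans ntu (comm_uv ntu)).
by apply/comm_vw/ntuv.
Qed.

Lemma proj_equiv_nontorsion_commensurable u v :
  proj_equiv u v -> nontorsion_commensurable u v.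
Proof.
elim=> {u v} [u v | u | u v _ | u v w _ uv _ vw].
- exact: proj_gen_nontorsion_commensurable.
- exact: nontorsion_commensurable_refl.
- exact: nontorsion_commensurable_sym.
- exact: nontorsion_commensurable_trans uv vw.
Qed.

End Commensurable.

Theorem theorem4p3 (R : idomainType) (M : lmodType R) (x y : M) :
  ~ torsion x -> ~ torsion y -> same_class x y ->
  exists a b : R, a *: x = b *: y /\ a *: x != 0.
Proof.
move=> ntx _ [_ [_ xy]].
by have [_ comm_xy] := proj_equiv_nontorsion_commensurable xy; apply: comm_xy.
Qed.
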